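(* Let $(P,\leq,{}',0,1)$ be an orthogonal lub-complete poset and $x,y,z\in P$. Then the following hold: (i) $x\rightarrow_K y\approx x\vee y'\vee \mathrm{Max}\,L(x',y)$ if $x\leq y$; $x\rightarrow_K y\approx y\vee \mathrm{Max}\,L(x',y')$ if $x\perp y$; $x\rightarrow_K y\approx x'\vee (x\wedge \mathrm{Min}\,U(x',y))$ if $y\leq x$; (ii) $x\rightarrow_K 1\approx x\vee x'$, $1\rightarrow_K x\approx x$; (iii) $x\rightarrow_K 0\approx x'$, $0\rightarrow_K x\approx x\vee x'$.
   Context: $(P,\leq,{}',0,1)$ is a bounded poset with an antitone involution ${}'$ ($x\leq y\Rightarrow y'\leq x'$, $x''=x$); $x\perp y$ means $x\leq y'$; orthogonal means $x\perp y$ implies the supremum $x\vee y$ exists; lub-complete means for every lower bound $x$ of a finite subset $M$ there is a maximal lower bound of $M$ above $x$. For $A\subseteq P$, $L(A)$ and $U(A)$ are the sets of lower and upper bounds, $L(x,y)=L(\{x,y\})$ etc.; $\mathrm{Max}\,A$ and $\mathrm{Min}\,A$ are the sets of maximal and minimal elements of $A$. For $y\in P$, $A,B\subseteq P$, $y\vee A=\{y\vee a\mid a\in A\}$, $A\vee B=\{a\vee b\mid a\in A,b\in B\}$ (when all these joins exist), similarly for $\wedge$. The Kalmbach implication is $x\rightarrow_K y:=\mathrm{Max}\,L(x',y)\vee \mathrm{Max}\,L(x',y')\vee (x\wedge \mathrm{Min}\,U(x',y))$, which is well defined in such a poset. Singletons are identified with elements. *)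

From Stdlib Require Import List Classical ClassicalDescription.

Record biposet := BiPoset {
  car :> Type;
  le : car -> car -> Prop;
  inv : car -> car;
  zero : car;
  one : car;
  le_refl : forall x, le x x;
  le_trans : forall x y z, le x y -> le y z -> le x z;
  le_antisym : forall x y, le x y -> le y x -> x = y;
  zero_le : forall x, le zero x;
  le_one : forall x, le x one;
  inv_antitone : forall x y, le x y -> le (inv y) (inv x);
  inv_inv : forall x, inv (inv x) = x
}.
Arguments le {b} _ _.
Arguments inv {b} _.
Arguments zero {b}.
Arguments one {b}.

Section Defs.
Variable P : biposet.

Definition pset := P -> Prop.

Definition perp (x y : P) : Prop := le x (inv y).

Definition is_sup (x y s : P) : Prop :=
  le x s /\ le y s /\ forall u, le x u -> le y u -> le s u.
Definition is_inf (x y s : P) : Prop :=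
  le s x /\ le s y /\ forall u, le u x -> le u y -> le u s.

Definition L (A : pset) : pset := fun z => forall a, A a -> le z a.
Definition U (A : pset) : pset := fun z => forall a, A a -> le a z.
Definition L2 (x y : P) : pset := L (fun a => a = x \/ a = y).
Definition U2 (x y : P) : pset := U (fun a => a = x \/ a = y).
Definition Max (A : pset) : pset :=
  fun z => A z /\ forall w, A w -> le z w -> w = z.
Definition Min (A : pset) : pset :=
  fun z => A z /\ forall w, A w -> le w z -> w = z.

Definition finite_set (A : pset) : Prop :=
  exists l : list P, forall z, A z <-> In z l.

Definition orthogonal : Prop :=
  forall x y : P, perp x y -> exists s, is_sup x y s.

Definition lub_complete : Prop :=
  forall M : pset, finite_set M ->
    forall x, L M x -> exists m, Max (L M) m /\ le x m.

(** Partially defined set-valued terms: None = undefined. *)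
Definition pterm := option pset.

Definition elem (x : P) : pterm := Some (fun z => z = x).
Definition sset (A : pset) : pterm := Some A.

Definition sjoin (A B : pterm) : pterm :=
  match A, B with
  | Some A, Some B =>
      if excluded_middle_informative
           (forall a b, A a -> B b -> exists s, is_sup a b s)
      then Some (fun s => exists a b, A a /\ B b /\ is_sup a b s)
      else None
  | _, _ => None
  end.

Definition smeet (A B : pterm) : pterm :=
  match A, B with
  | Some A, Some B =>
      if excluded_middle_informative
           (forall a b, A a -> B b -> exists s, is_inf a b s)
      then Some (fun s => exists a b, A a /\ B b /\ is_inf a b s)
      else None
  | _, _ => None
  end.

Definition kequiv (t s : pterm) : Prop :=
  match t, s with
  | None, None => True
  | Some A, Some B => forall z, A z <-> B z
  | _, _ => False
  end.

Definition kalmbach (x y : P) : pterm :=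
  sjoin (sjoin (sset (Max (L2 (inv x) y))) (sset (Max (L2 (inv x) (inv y)))))
        (smeet (elem x) (sset (Min (U2 (inv x) y)))).

End Defs.

Arguments perp {P} _ _.
Arguments is_sup {P} _ _ _.
Arguments is_inf {P} _ _ _.
Arguments L {P} _ _.
Arguments U {P} _ _.
Arguments L2 {P} _ _ _.
Arguments U2 {P} _ _ _.
Arguments Max {P} _ _.
Arguments Min {P} _ _.
Arguments elem {P} _.
Arguments sset {P} _.
Arguments sjoin {P} _ _.
Arguments smeet {P} _ _.
Arguments kequiv {P} _ _.
Arguments kalmbach {P} _ _.

(* In each case of (i), comparability of x with y, or of x' with y, turns two of
   the sets L(x',y), L(x',y'), U(x',y) into singletons and reduces the meet
   x /\ Min U(x',y) to x or to x /\ x'.  Orthogonality supplies every join that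
   arises, and lub-completeness makes Max L(x',y) and Min U(x',y) non-empty, so
   joining or meeting with them never yields the empty set.  The one genuine
   step is the orthogonal case: x /\ x' lies below every maximal lower bound b
   of {x', y'}, because (x /\ x') \/ b is again a lower bound of {x', y'}.
   Parts (ii) and (iii) are instances of (i) with 0 or 1 as an argument. *)

From Stdlib Require Import List ClassicalDescription FunctionalExtensionality PropExtensionality.

Section Biposet.
Variable P : biposet.
Implicit Types a b c p q s t x y : P.
Implicit Types A M : pset P.

Lemma pset_ext A M : (forall z, A z <-> M z) -> A = M.
Proof.
  intros HAM. apply functional_extensionality. intros z.
  apply propositional_extensionality. apply HAM.
Qed.

Lemma kequiv_refl (t : pterm P) : kequiv t t.
Proof. destruct t; simpl; tauto. Qed.

Lemma inv_le_swap a b : le (inv a) b -> le (inv b) a.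
Proof. intros H. rewrite <- (inv_inv P a). apply inv_antitone. exact H. Qed.

Lemma le_inv_swap a b : le a (inv b) -> le b (inv a).
Proof. intros H. rewrite <- (inv_inv P b). apply inv_antitone. exact H. Qed.

Lemma inv_one : inv (@one P) = zero.
Proof. apply le_antisym; [apply inv_le_swap, le_one | apply zero_le]. Qed.

Lemma inv_zero : inv (@zero P) = one.
Proof. rewrite <- inv_one, inv_inv. reflexivity. Qed.

Lemma is_sup_unique a b s t : is_sup a b s -> is_sup a b t -> s = t.
Proof. intros [Ha [Hb Hs]] [Ga [Gb Gt]]. apply le_antisym; auto. Qed.

Lemma is_inf_unique a b s t : is_inf a b s -> is_inf a b t -> s = t.
Proof. intros [Ha [Hb Hs]] [Ga [Gb Gt]]. apply le_antisym; auto. Qed.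

Lemma is_sup_comm a b s : is_sup a b s -> is_sup b a s.
Proof. intros [Ha [Hb Hs]]. repeat split; auto. Qed.

Lemma is_sup_of_le a b : le a b -> is_sup a b b.
Proof. intros H. repeat split; auto using le_refl. Qed.

Lemma is_sup_of_ge a b : le b a -> is_sup a b a.
Proof. intros H. repeat split; auto using le_refl. Qed.

Lemma is_inf_of_le a b : le a b -> is_inf a b a.
Proof. intros H. repeat split; auto using le_refl. Qed.

Lemma is_inf_of_ge a b : le b a -> is_inf a b b.
Proof. intros H. repeat split; auto using le_refl. Qed.

Lemma is_sup_assoc a b c s p t :
  is_sup a b s -> is_sup b c p -> is_sup s c t -> is_sup a p t.
Proof.
  intros [Sa [Sb Ss]] [Pb [Pc Pp]] [Ts [Tc Tt]]. repeat split.
  - apply (le_trans P _ s); assumption.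
  - apply Pp; [apply (le_trans P _ s) | ]; assumption.
  - intros u Hau Hpu. apply Tt.
    + apply Ss; [| apply (le_trans P _ p)]; assumption.
    + apply (le_trans P _ p); assumption.
Qed.

Lemma L2P p q z : L2 p q z <-> le z p /\ le z q.
Proof.
  split; [intros H; split; apply H; auto |].
  intros [Hp Hq] a [-> | ->]; assumption.
Qed.

Lemma U2P p q z : U2 p q z <-> le p z /\ le q z.
Proof.
  split; [intros H; split; apply H; auto |].
  intros [Hp Hq] a [-> | ->]; assumption.
Qed.

Lemma Max_eq_greatest A a :
  A a -> (forall w, A w -> le w a) -> Max A = (fun z => z = a).
Proof.
  intros Ha Hgr. apply pset_ext. intros z. split.
  - intros [Hz Hmax]. symmetry. apply Hmax; auto.
  - intros ->. split; [exact Ha |]. intros w Hw Hle. apply le_antisym; auto.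
Qed.

Lemma Min_eq_least A a :
  A a -> (forall w, A w -> le a w) -> Min A = (fun z => z = a).
Proof.
  intros Ha Hlst. apply pset_ext. intros z. split.
  - intros [Hz Hmin]. symmetry. apply Hmin; auto.
  - intros ->. split; [exact Ha |]. intros w Hw Hle. apply le_antisym; auto.
Qed.

Lemma Max_L2_of_le p q : le p q -> sset (Max (L2 p q)) = elem p.
Proof.
  intros H. unfold sset, elem. f_equal. apply Max_eq_greatest.
  - apply L2P. auto using le_refl.
  - intros w Hw. apply L2P in Hw. tauto.
Qed.

Lemma Max_L2_of_ge p q : le q p -> sset (Max (L2 p q)) = elem q.
Proof.
  intros H. unfold sset, elem. f_equal. apply Max_eq_greatest.
  - apply L2P. auto using le_refl.
  - intros w Hw. apply L2P in Hw. tauto.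
Qed.

Lemma Min_U2_of_le p q : le p q -> sset (Min (U2 p q)) = elem q.
Proof.
  intros H. unfold sset, elem. f_equal. apply Min_eq_least.
  - apply U2P. auto using le_refl.
  - intros w Hw. apply U2P in Hw. tauto.
Qed.

Lemma Min_U2_of_ge p q : le q p -> sset (Min (U2 p q)) = elem p.
Proof.
  intros H. unfold sset, elem. f_equal. apply Min_eq_least.
  - apply U2P. auto using le_refl.
  - intros w Hw. apply U2P in Hw. tauto.
Qed.

Lemma sjoin_Some A M :
  (forall a b, A a -> M b -> exists s, is_sup a b s) ->
  sjoin (Some A) (Some M) = Some (fun s => exists a b, A a /\ M b /\ is_sup a b s).
Proof.
  intros H. unfold sjoin.
  destruct excluded_middle_informative; [reflexivity | contradiction].
Qed.

Lemma smeet_Some A M :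
  (forall a b, A a -> M b -> exists s, is_inf a b s) ->
  smeet (Some A) (Some M) = Some (fun s => exists a b, A a /\ M b /\ is_inf a b s).
Proof.
  intros H. unfold smeet.
  destruct excluded_middle_informative; [reflexivity | contradiction].
Qed.

Lemma sjoin_elem a b s : is_sup a b s -> sjoin (elem a) (elem b) = elem s.
Proof.
  intros Hs. unfold elem. rewrite sjoin_Some.
  - f_equal. apply pset_ext. intros t. split.
    + intros [a' [b' [-> [-> Ht]]]]. eapply is_sup_unique; eauto.
    + intros ->. eauto.
  - intros a' b' -> ->. eauto.
Qed.

Lemma smeet_elem a b s : is_inf a b s -> smeet (elem a) (elem b) = elem s.
Proof.
  intros Hs. unfold elem. rewrite smeet_Some.
  - f_equal. apply pset_ext. intros t. split.
    + intros [a' [b' [-> [-> Ht]]]]. eapply is_inf_unique; eauto.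
    + intros ->. eauto.
  - intros a' b' -> ->. eauto.
Qed.

Lemma sjoin_set_elem A b :
  (forall a, A a -> exists s, is_sup a b s) ->
  sjoin (sset A) (elem b) = sset (fun s => exists a, A a /\ is_sup a b s).
Proof.
  intros H. unfold elem, sset. rewrite sjoin_Some.
  - f_equal. apply pset_ext. intros s. split.
    + intros [a [b' [Ha [-> Hs]]]]. eauto.
    + intros [a [Ha Hs]]. eauto.
  - intros a b' Ha ->. auto.
Qed.

Lemma sjoin_elem_set A b :
  (forall a, A a -> exists s, is_sup b a s) ->
  sjoin (elem b) (sset A) = sset (fun s => exists a, A a /\ is_sup b a s).
Proof.
  intros H. unfold elem, sset. rewrite sjoin_Some.
  - f_equal. apply pset_ext. intros s. split.
    + intros [b' [a [-> [Ha Hs]]]]. eauto.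
    + intros [a [Ha Hs]]. eauto.
  - intros b' a -> Ha. auto.
Qed.

Lemma sjoin_set_elem_upper A b :
  (exists a, A a) -> (forall a, A a -> le a b) -> sjoin (sset A) (elem b) = elem b.
Proof.
  intros [a0 Ha0] Hup. rewrite sjoin_set_elem.
  - unfold sset, elem. f_equal. apply pset_ext. intros s. split.
    + intros [a [Ha Hs]]. eapply is_sup_unique; eauto using is_sup_of_le.
    + intros ->. eauto using is_sup_of_le.
  - intros a Ha. eauto using is_sup_of_le.
Qed.

Lemma sjoin_set_elem_lower A c :
  (forall s, A s -> le c s) -> sjoin (sset A) (elem c) = sset A.
Proof.
  intros Hlow. rewrite sjoin_set_elem.
  - unfold sset, elem. f_equal. apply pset_ext. intros s. split.
    + intros [a [Ha Hs]]. replace s with a; [exact Ha |].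
      eapply is_sup_unique; eauto using is_sup_of_ge.
    + intros Hs. eauto using is_sup_of_ge.
  - intros a Ha. eauto using is_sup_of_ge.
Qed.

Lemma smeet_elem_set_lower M a :
  (exists m, M m) -> (forall m, M m -> le a m) -> smeet (elem a) (sset M) = elem a.
Proof.
  intros [m0 Hm0] Hlow. unfold elem, sset. rewrite smeet_Some.
  - f_equal. apply pset_ext. intros i. split.
    + intros [a' [m [-> [Hm Hi]]]]. eapply is_inf_unique; eauto using is_inf_of_le.
    + intros ->. exists a, m0. auto using is_inf_of_le.
  - intros a' m -> Hm. eauto using is_inf_of_le.
Qed.

Lemma sjoin_set_elem_elem A b c p :
  is_sup c b p ->
  (forall a, A a -> exists s, is_sup a b s) ->
  (forall a s, A a -> is_sup a b s -> exists t, is_sup s c t) ->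
  sjoin (sjoin (sset A) (elem b)) (elem c) = sjoin (elem p) (sset A).
Proof.
  intros Hp Hab Habc.
  assert (Hassoc : forall a s t, is_sup a b s -> is_sup s c t -> is_sup p a t).
  { intros a s t Hs Ht. apply is_sup_comm.
    eapply is_sup_assoc; eauto using is_sup_comm. }
  rewrite (sjoin_set_elem A b Hab), sjoin_set_elem, sjoin_elem_set.
  - f_equal. apply pset_ext. intros t. split.
    + intros [s [[a [Ha Hs]] Ht]]. eauto.
    + intros [a [Ha Ht]]. destruct (Hab a Ha) as [s Hs].
      exists s. split; [eauto |].
      apply is_sup_comm. eapply is_sup_assoc; eauto using is_sup_comm.
  - intros a Ha. destruct (Hab a Ha) as [s Hs].
    destruct (Habc a s Ha Hs) as [t Ht]. eauto.
  - intros s [a [Ha Hs]]. eauto.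
Qed.

Section Orthogonal.
Hypothesis Horth : orthogonal P.

Lemma orthogonal_inf a b : le (inv a) b -> exists i, is_inf a b i.
Proof.
  intros H. destruct (Horth (inv a) (inv b)) as [s [Sa [Sb Ss]]].
  { unfold perp. rewrite inv_inv. exact H. }
  exists (inv s). repeat split; try (apply inv_le_swap; assumption).
  intros u Hua Hub. apply le_inv_swap. apply Ss; apply inv_antitone; assumption.
Qed.

Lemma Max_L_perp_le A b c : Max (L A) b -> L A c -> perp c b -> le c b.
Proof.
  intros [Hb Hmax] Hc Hcb. destruct (Horth c b Hcb) as [d [Hcd [Hbd Hd]]].
  assert (Hdb : d = b) by (apply Hmax; [intros a Ha; apply Hd; auto | exact Hbd]).
  rewrite <- Hdb. exact Hcd.
Qed.

Lemma kalmbach_of_perp x y : perp x y ->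
  kalmbach x y = sjoin (elem y) (sset (Max (L2 (inv x) (inv y)))).
Proof.
  intros Hxy. unfold kalmbach.
  assert (Hyx : le y (inv x)) by (apply le_inv_swap; exact Hxy).
  destruct (orthogonal_inf x (inv x) (le_refl P _)) as [c Hc].
  rewrite (Max_L2_of_ge (inv x) y Hyx), (Min_U2_of_ge (inv x) y Hyx),
    (smeet_elem x (inv x) c Hc).
  destruct Hc as [Hcx [Hcx' _]].
  rewrite sjoin_elem_set.
  - apply sjoin_set_elem_lower. intros s [b [Hb [_ [Hbs _]]]].
    eapply le_trans; [| exact Hbs].
    apply (Max_L_perp_le _ _ _ Hb).
    + apply L2P. split; [exact Hcx' | apply (le_trans P _ x); assumption].
    + eapply le_trans; [exact Hcx |]. apply le_inv_swap.
      destruct Hb as [Hb _]. apply L2P in Hb. tauto.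
  - intros b [Hb _]. apply Horth. apply le_inv_swap. apply L2P in Hb. tauto.
Qed.

Section LubComplete.
Hypothesis Hlub : lub_complete P.

Lemma Max_L2_nonempty p q : exists m, Max (L2 p q) m.
Proof.
  destruct (Hlub (fun a => a = p \/ a = q)) with (x := @zero P) as [m [Hm _]].
  - exists (p :: q :: nil). intros z. simpl. intuition.
  - intros a _. apply zero_le.
  - eauto.
Qed.

Lemma Min_U2_nonempty p q : exists m, Min (U2 p q) m.
Proof.
  destruct (Max_L2_nonempty (inv p) (inv q)) as [k [Hk Hmax]].
  apply L2P in Hk. destruct Hk as [Hkp Hkq].
  exists (inv k). split; [apply U2P; split; apply le_inv_swap; assumption |].
  intros w Hw Hwk. apply U2P in Hw. destruct Hw as [Hpw Hqw].
  rewrite <- (inv_inv P w). f_equal. apply Hmax.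
  - apply L2P. split; apply inv_antitone; assumption.
  - apply le_inv_swap. exact Hwk.
Qed.

Lemma kalmbach_of_le x y : le x y ->
  kalmbach x y = sjoin (sjoin (elem x) (elem (inv y))) (sset (Max (L2 (inv x) y))).
Proof.
  intros Hxy. unfold kalmbach.
  assert (Hyx : le (inv y) (inv x)) by (apply inv_antitone; exact Hxy).
  assert (Hperp : perp x (inv y)) by (unfold perp; rewrite inv_inv; exact Hxy).
  destruct (Horth x (inv y) Hperp) as [p Hp].
  rewrite (Max_L2_of_ge (inv x) (inv y) Hyx), smeet_elem_set_lower,
    (sjoin_elem x (inv y) p Hp).
  - apply sjoin_set_elem_elem; [exact Hp | |].
    + intros a [Ha _]. apply Horth. unfold perp. rewrite inv_inv. apply L2P in Ha. tauto.
    + intros a s [Ha _] [Has [Hys Hs]]. apply Horth. unfold perp.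
      apply Hs; [apply L2P in Ha; tauto | exact Hyx].
  - apply Min_U2_nonempty.
  - intros m [Hm _]. apply U2P in Hm. eapply le_trans; [exact Hxy | tauto].
Qed.

Lemma kalmbach_of_ge x y : le y x ->
  kalmbach x y = sjoin (elem (inv x)) (smeet (elem x) (sset (Min (U2 (inv x) y)))).
Proof.
  intros Hyx. unfold kalmbach.
  assert (Hxy : le (inv x) (inv y)) by (apply inv_antitone; exact Hyx).
  rewrite (Max_L2_of_le (inv x) (inv y) Hxy), sjoin_set_elem_upper.
  - reflexivity.
  - apply Max_L2_nonempty.
  - intros a [Ha _]. apply L2P in Ha. tauto.
Qed.

End LubComplete.
End Orthogonal.
End Biposet.

Theorem proposition4 (P : biposet) (Horth : orthogonal P) (Hlub : lub_complete P)
  (x y z : P) :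
  (* (i) *)
  (le x y ->
     kequiv (kalmbach x y)
            (sjoin (sjoin (elem x) (elem (inv y))) (sset (Max (L2 (inv x) y))))) /\
  (perp x y ->
     kequiv (kalmbach x y)
            (sjoin (elem y) (sset (Max (L2 (inv x) (inv y)))))) /\
  (le y x ->
     kequiv (kalmbach x y)
            (sjoin (elem (inv x)) (smeet (elem x) (sset (Min (U2 (inv x) y)))))) /\
  (* (ii) *)
  kequiv (kalmbach x one) (sjoin (elem x) (elem (inv x))) /\
  kequiv (kalmbach one x) (elem x) /\
  (* (iii) *)
  kequiv (kalmbach x zero) (elem (inv x)) /\
  kequiv (kalmbach zero x) (sjoin (elem x) (elem (inv x))).
Proof.
  assert (Hx0 : perp x (@zero P)) by (unfold perp; rewrite inv_zero; apply le_one).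
  assert (H0x : perp (@zero P) x) by apply zero_le.
  repeat split; intros.
  - rewrite kalmbach_of_le by assumption. apply kequiv_refl.
  - rewrite kalmbach_of_perp by assumption. apply kequiv_refl.
  - rewrite kalmbach_of_ge by assumption. apply kequiv_refl.
  - rewrite kalmbach_of_le, inv_one, (sjoin_elem P x zero x), Max_L2_of_le
      by auto using le_one, zero_le, is_sup_of_ge.
    apply kequiv_refl.
  - rewrite kalmbach_of_ge, inv_one, Min_U2_of_le, (smeet_elem P one x x),
      (sjoin_elem P zero x x) by auto using le_one, zero_le, is_sup_of_le, is_inf_of_ge.
    apply kequiv_refl.
  - rewrite kalmbach_of_perp, inv_zero, Max_L2_of_le, (sjoin_elem P zero (inv x) (inv x))
      by auto using le_one, zero_le, is_sup_of_le.
    apply kequiv_refl.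
  - rewrite kalmbach_of_perp, inv_zero, Max_L2_of_ge by auto using le_one.
    apply kequiv_refl.
Qed.
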